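(* Let $S=\{0,1,\dots,p-1\}$ with $p\ge 2$, let $m\ge 2$, and let $f:S^m\to S$ be a local rule. The global map $\tau$ is injective if and only if there exists neither a pair of replaceable local configurations nor a pair of periodic local configurations for $f$.
   Context: A local configuration is a finite word over $S$. For a word $w=w_1w_2\cdots w_n$ with $n\ge m$, its successor under $f$ is the word $\hat f(w)=u_1\cdots u_{n-m+1}$ with $u_j=f(w_j,w_{j+1},\dots,w_{j+m-1})$. For $k\le n$, $\mathrm{left}_k(w)=w_1\cdots w_k$ and $\mathrm{right}_k(w)=w_{n-k+1}\cdots w_n$. The global map is $\tau:S^{\mathbb Z}\to S^{\mathbb Z}$, $\tau(c)(i)=f(c(i-L),\dots,c(i+R))$ for fixed integers $L,R\ge 0$ with $L+1+R=m$; the CA is (globally) injective if $\tau$ is injective. Two local configurations $\alpha,\beta$ of the same length $n$ are replaceable if: $n\ge 2m-1$; $\alpha\ne\beta$; $\mathrm{left}_{m-1}(\alpha)=\mathrm{left}_{m-1}(\beta)$; $\mathrm{right}_{m-1}(\alpha)=\mathrm{right}_{m-1}(\beta)$; and $\hat f(\alpha)=\hat f(\beta)$. They are periodic if: $n\ge m$; $\alpha\ne\beta$; $\mathrm{left}_{m-1}(\alpha)=\mathrm{right}_{m-1}(\alpha)$; $\mathrm{left}_{m-1}(\beta)=\mathrm{right}_{m-1}(\beta)$; and $\hat f(\alpha)=\hat f(\beta)$. *)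

From mathcomp Require Import all_boot all_algebra.
Set Implicit Arguments. Unset Strict Implicit. Unset Printing Implicit Defensive.
Import GRing.Theory.

(* Successor of a finite word: apply f to each length-m window w_j...w_{j+m-1},
   j = 1..n-m+1 (every window has size m when size w >= m). *)
Definition succ_word (p m : nat) (f : m.-tuple 'I_p -> 'I_p) (w : seq 'I_p) : seq 'I_p :=
  [seq f t | t <- pmap (fun s : seq 'I_p => insub s : option (m.-tuple 'I_p))
                     [seq take m (drop j w) | j <- iota 0 (size w - m).+1]].

Definition left_k (p k : nat) (w : seq 'I_p) : seq 'I_p := take k w.
Definition right_k (p k : nat) (w : seq 'I_p) : seq 'I_p := drop (size w - k) w.

(* Global map: tau(c)(i) = f(c(i-L), ..., c(i+R)), with L+1+R = m. *)
Definition global_map (p m : nat) (f : m.-tuple 'I_p -> 'I_p) (L : nat)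
  (c : int -> 'I_p) : int -> 'I_p :=
  fun i => f (mktuple (fun k : 'I_m => c (i - L%:Z + (k : nat)%:Z)%R)).

Definition replaceable (p m : nat) (f : m.-tuple 'I_p -> 'I_p) (a b : seq 'I_p) : Prop :=
  [/\ (size a = size b /\ (2 * m - 1 <= size a)%N), a <> b,
      left_k (m - 1) a = left_k (m - 1) b,
      right_k (m - 1) a = right_k (m - 1) b
    & succ_word f a = succ_word f b].

Definition periodic_pair (p m : nat) (f : m.-tuple 'I_p -> 'I_p) (a b : seq 'I_p) : Prop :=
  [/\ (size a = size b /\ (m <= size a)%N), a <> b,
      left_k (m - 1) a = right_k (m - 1) a,
      left_k (m - 1) b = right_k (m - 1) b
    & succ_word f a = succ_word f b].

From mathcomp Require Import all_boot all_algebra zify.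
From Stdlib Require Import FunctionalExtensionality.
Import GRing.Theory.
Set Implicit Arguments. Unset Strict Implicit. Unset Printing Implicit Defensive.
Local Open Scope ring_scope.

(* Given a replaceable pair a, b, pad both
   words with a common background symbol.  The padded configurations differ,
   yet have the same image: a window of tau lies either inside the words
   (where the successors agree) or sees only cells of the first or last m-1
   symbols, where a and b agree.  Given a periodic pair of length n, repeat
   both words with period n-m+1; every window is a window of the words
   themselves, so the images agree again.

   Let tau(c1) = tau(c2) and
   c1(d) <> c2(d).  Call the (m-1)-blocks of c1 and c2 at a position agreeing
   if they coincide.  Among N+1 consecutive positions, N being the number of
   pairs of blocks, some position is agreeing: otherwise two positions carry
   the same pair of blocks by pigeonhole, and the words between them form a
   periodic pair.  An agreeing position to the right of d and one at distance
   at least m to its left enclose a replaceable pair. *)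

Section Words.
Variables (T : Type) (x0 : T).
Implicit Types (a b : seq T).

Lemma nth_eq_borders a b k : size a = size b -> take k a = take k b ->
    drop (size a - k) a = drop (size b - k) b ->
  forall j, (j < k)%N || (size a - k <= j)%N -> nth x0 a j = nth x0 b j.
Proof.
move=> eq_size eq_left eq_right j /orP [lt_jk | le_j].
  by rewrite -(nth_take x0 lt_jk a) -(nth_take x0 lt_jk b) eq_left.
have [le_aj | lt_ja] := leqP (size a) j; first by rewrite !nth_default // -eq_size.
have -> : j = (size a - k + (j - (size a - k)))%N by lia.
by rewrite -!nth_drop eq_right -eq_size.
Qed.

Lemma nth_mod_period a m : (0 < m <= size a)%N ->
    take (m - 1) a = drop (size a - (m - 1)) a ->
  forall j, (j < size a)%N -> nth x0 a (j %% (size a - m).+1) = nth x0 a j.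
Proof.
move=> /andP [m_gt0 le_m] eq_ends j; elim/ltn_ind: j => j IHj lt_j.
set k := (size a - m).+1.
have [lt_jk | le_kj] := ltnP j k; first by rewrite modn_small.
have -> : j = (j - k + k)%N by lia.
rewrite modnDr IHj; [|lia|lia].
have lt_jk : (j - k < m - 1)%N by lia.
rewrite -(nth_take x0 lt_jk) eq_ends nth_drop; congr nth; lia.
Qed.

End Words.

Section Segments.
Variable T : Type.
Implicit Types (c : int -> T) (i : int) (n : nat).

Definition segment c i n : seq T := mkseq (fun k => c (i + k%:Z)) n.

Lemma size_segment c i n : size (segment c i n) = n.
Proof. exact: size_mkseq. Qed.

Lemma nth_segment c i n x0 k : (k < n)%N -> nth x0 (segment c i n) k = c (i + k%:Z).
Proof. exact: nth_mkseq. Qed.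

Lemma take_segment c i n k : (k <= n)%N -> take k (segment c i n) = segment c i k.
Proof.
move=> le_kn; apply: (eq_from_nth (x0 := c i)); first by rewrite size_takel ?size_segment.
move=> j; rewrite size_takel ?size_segment // => lt_jk.
by rewrite nth_take // !nth_segment //; lia.
Qed.

Lemma drop_segment c i n k : drop k (segment c i n) = segment c (i + k%:Z) (n - k).
Proof.
apply: (eq_from_nth (x0 := c i)); first by rewrite size_drop !size_segment.
move=> j; rewrite size_drop size_segment => lt_j.
by rewrite nth_drop !nth_segment; [congr c|lia|lia]; lia.
Qed.

(* A segment is the sequence underlying the corresponding tuple; used to
   apply pigeonhole to blocks, which live in a finite type only as tuples. *)
Lemma segment_tuple c i n : val [tuple c (i + (k : nat)%:Z) | k < n] = segment c i n.
Proof. by rewrite /= /segment /mkseq -val_enum_ord -map_comp. Qed.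

End Segments.

Section LocalGlobal.
Variables (p m : nat) (f : m.-tuple 'I_p -> 'I_p) (L : nat).
Implicit Types (c : int -> 'I_p) (i : int) (n : nat).

(* succ_word converts each window to an m-tuple with insub; on windows that
   all have size m this conversion always succeeds. *)
Lemma map_insub_tuples (h : nat -> seq 'I_p) (g : nat -> 'I_p) (s : seq nat) :
  (forall j, j \in s -> size (h j) = m) ->
  (forall j, j \in s -> forall t : m.-tuple 'I_p, val t = h j -> f t = g j) ->
  [seq f t | t <- pmap (fun w : seq 'I_p => insub w : option (m.-tuple 'I_p)) (map h s)]
  = map g s.
Proof.
elim: s => [|j s IHs] //= size_h f_h.
have size_hj : size (h j) == m by rewrite size_h ?mem_head.
rewrite (insubT (fun s : seq _ => size s == m) size_hj) /=.
rewrite (f_h j (mem_head _ _) _ (SubK _ _)) IHs // => k s_k.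
  by apply: size_h; rewrite in_cons s_k orbT.
by apply: f_h; rewrite in_cons s_k orbT.
Qed.

Lemma succ_word_segment c i n : (m <= n)%N ->
  succ_word f (segment c i n) = segment (global_map f L c) (i + L%:Z) (n - m).+1.
Proof.
move=> le_mn; rewrite /succ_word size_segment.
have -> : [seq take m (drop j (segment c i n)) | j <- iota 0 (n - m).+1] =
          [seq segment c (i + j%:Z) m | j <- iota 0 (n - m).+1].
  apply/eq_in_map => j; rewrite mem_iota => /andP [_ lt_j].
  by rewrite drop_segment take_segment //; lia.
apply: map_insub_tuples => j _; first by rewrite size_segment.
move=> t val_t; rewrite /global_map; congr f.
apply: eq_from_tnth => k; rewrite tnth_mktuple (tnth_nth (c i)) val_t nth_segment //.
by congr c; lia.
Qed.

End LocalGlobal.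


Section Soundness.
Variables (p m : nat) (f : m.-tuple 'I_p -> 'I_p) (L : nat) (a0 : 'I_p).
Hypothesis m_gt0 : (0 < m)%N.
Implicit Types (c : int -> 'I_p) (x : int) (a b : seq 'I_p).

Lemma global_map_local c c' x x' :
  (forall k : 'I_m, c (x - L%:Z + (k : nat)%:Z) = c' (x' - L%:Z + (k : nat)%:Z)) ->
  global_map f L c x = global_map f L c' x'.
Proof. by move=> eq_c; rewrite /global_map; congr f; apply: eq_mktuple. Qed.

Definition pad a (z : int) : 'I_p :=
  match z with Posz k => nth a0 a k | Negz _ => a0 end.

Lemma segment_pad a : segment (pad a) 0 (size a) = a.
Proof.
apply: (eq_from_nth (x0 := a0)); first by rewrite size_segment.
by move=> j; rewrite size_segment => lt_j; rewrite nth_segment // add0r.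
Qed.

Lemma global_map_pad a (r : nat) : (m <= size a)%N -> (r <= size a - m)%N ->
  global_map f L (pad a) (r%:Z + L%:Z) = nth a0 (succ_word f a) r.
Proof.
move=> le_m le_r; rewrite -{2}(segment_pad a) (succ_word_segment f L) //.
by rewrite nth_segment // add0r addrC.
Qed.

Lemma replaceable_not_injective a b :
  replaceable f a b -> ~ injective (global_map f L).
Proof.
move=> [[eq_size le_size] neq_ab eq_left eq_right eq_succ] inj.
rewrite /left_k /right_k in eq_left eq_right.
have eq_border := nth_eq_borders a0 eq_size eq_left eq_right.
apply: neq_ab; rewrite -(segment_pad a) -(segment_pad b) -eq_size; congr segment.
apply: inj; apply: functional_extensionality => x.
case Ex: (x - L%:Z) => [r|r].
- have [le_rm | gt_rm] := leqP (r + m) (size a).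
    have -> : x = r%:Z + L%:Z by lia.
    by rewrite !global_map_pad -?eq_size ?eq_succ //; lia.
  apply: global_map_local => k; rewrite Ex -PoszD /=.
  by apply: eq_border; apply/orP; right; have := ltn_ord k; lia.
- apply: global_map_local => k; rewrite Ex.
  case Ek: (Negz r + (k : nat)%:Z) => [j|j] //=.
  apply: eq_border; apply/orP; left; have := ltn_ord k.
  by move: Ek; rewrite NegzE; lia.
Qed.

Definition periodize a (k : nat) (z : int) : 'I_p := nth a0 a (absz (z %% k)%Z).

Lemma absz_modz (x : int) (k : nat) : (0 < k)%N ->
  (x %% k)%Z = (absz (x %% k)%Z)%:Z /\ (absz (x %% k)%Z < k)%N.
Proof.
move=> k_gt0; have mod_ge0 := modz_ge0 x (d := k%:Z).
have mod_lt := ltz_pmod x (d := k%:Z).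
have /mod_ge0 {}mod_ge0 : k%:Z != 0 by lia.
have /mod_lt {}mod_lt : 0 < k%:Z by lia.
lia.
Qed.

Lemma global_map_periodize a x : (m <= size a)%N ->
    take (m - 1) a = drop (size a - (m - 1)) a ->
  let k := (size a - m).+1 in
  global_map f L (periodize a k) x =
  global_map f L (pad a) ((absz ((x - L%:Z) %% k)%Z)%:Z + L%:Z).
Proof.
move=> le_m eq_ends k; have [Er lt_r] := absz_modz (x - L%:Z) (ltn0Sn (size a - m)).
apply: global_map_local => j; rewrite addrK -PoszD /= /periodize.
rewrite -modzDml Er -PoszD modz_nat /= nth_mod_period ?m_gt0 //.
have := ltn_ord j; rewrite /k in lt_r *; lia.
Qed.

Lemma periodic_not_injective a b :
  periodic_pair f a b -> ~ injective (global_map f L).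
Proof.
move=> [[eq_size le_size] neq_ab ends_a ends_b eq_succ] inj.
rewrite /left_k /right_k in ends_a ends_b.
have le_size_b : (m <= size b)%N by rewrite -eq_size.
set k := (size a - m).+1.
have eq_per : periodize a k = periodize b k.
  apply: inj; apply: functional_extensionality => x.
  rewrite global_map_periodize // /k eq_size global_map_periodize //.
  have [_ lt_r] := absz_modz (x - L%:Z) (ltn0Sn (size b - m)).
  by rewrite !global_map_pad ?eq_succ //; lia.
apply: neq_ab; apply: (eq_from_nth (x0 := a0)) => // j lt_j.
have a_per := nth_mod_period a0 _ ends_a lt_j.
have b_per := nth_mod_period a0 _ ends_b; rewrite -eq_size in b_per.
rewrite -a_per ?m_gt0 // -b_per ?m_gt0 -?eq_size //.
by move: (congr1 (fun c => c j%:Z) eq_per); rewrite /periodize modz_nat.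
Qed.

End Soundness.

Lemma pigeonhole_ord (T : finType) n (g : 'I_n -> T) : (#|T| < n)%N ->
  exists u v : 'I_n, (u < v)%N /\ g u = g v.
Proof.
move=> small_T; have /injectivePn [u [v neq_uv eq_g]] : ~~ injectiveb g.
  by apply/injectiveP => /leq_card; rewrite card_ord leqNgt small_T.
have [lt_uv | lt_vu | /val_inj eq_uv] := ltngtP u v.
- by exists u, v.
- by exists v, u.
- by rewrite eq_uv eqxx in neq_uv.
Qed.

Section Completeness.
Variables (p m : nat) (f : m.-tuple 'I_p -> 'I_p) (L : nat) (c1 c2 : int -> 'I_p).
Hypothesis m_gt0 : (0 < m)%N.
Hypothesis same_image : global_map f L c1 = global_map f L c2.
Implicit Types (i j d : int).

Lemma succ_word_segments i n : (m <= n)%N ->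
  succ_word f (segment c1 i n) = succ_word f (segment c2 i n).
Proof. by move=> le_mn; rewrite !(succ_word_segment f L) // same_image. Qed.

Lemma replaceable_between_agreements i j d :
  i + m%:Z <= j -> i <= d < j + (m - 1)%:Z -> c1 d != c2 d ->
  segment c1 i (m - 1) = segment c2 i (m - 1) ->
  segment c1 j (m - 1) = segment c2 j (m - 1) ->
  exists a b, replaceable f a b.
Proof.
move=> le_ij /andP [le_id lt_dj] neq_d agree_i agree_j.
set D := absz (j - i); have j_eq : j = i + D%:Z by lia.
exists (segment c1 i (D + (m - 1))), (segment c2 i (D + (m - 1))); split.
- by rewrite !size_segment; split => //; lia.
- have d_eq : i + (absz (d - i))%:Z = d by lia.
  move=> /(congr1 (nth (c1 d) ^~ (absz (d - i)))).
  rewrite !nth_segment ?d_eq; try lia.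
  by move=> eq_d; rewrite eq_d eqxx in neq_d.
- by rewrite /left_k !take_segment //; lia.
- by rewrite /right_k !size_segment addnK !drop_segment addKn -j_eq.
- by apply: succ_word_segments; lia.
Qed.

Lemma periodic_between_repetitions i j :
  i < j -> segment c1 i (m - 1) != segment c2 i (m - 1) ->
  segment c1 j (m - 1) = segment c1 i (m - 1) ->
  segment c2 j (m - 1) = segment c2 i (m - 1) ->
  exists a b, periodic_pair f a b.
Proof.
move=> lt_ij disagree_i repeat1 repeat2.
set D := absz (j - i); have j_eq : j = i + D%:Z by lia.
have ends_repeat c : segment c j (m - 1) = segment c i (m - 1) ->
    left_k (m - 1) (segment c i (D + (m - 1))) =
    right_k (m - 1) (segment c i (D + (m - 1))).
  move=> repeat_c; rewrite /left_k /right_k size_segment addnK take_segment ?leq_addl //.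
  by rewrite drop_segment addKn -j_eq repeat_c.
exists (segment c1 i (D + (m - 1))), (segment c2 i (D + (m - 1))); split.
- by rewrite !size_segment; split => //; lia.
- move=> /(congr1 (take (m - 1))); rewrite !take_segment ?leq_addl //.
  by move=> eq_i; rewrite eq_i eqxx in disagree_i.
- exact: ends_repeat.
- exact: ends_repeat.
- by apply: succ_word_segments; lia.
Qed.

Definition block_pairs : nat := #|{: (m - 1).-tuple 'I_p * (m - 1).-tuple 'I_p}|.

Lemma agreement_within_block_pairs i :
  ~ (exists a b, periodic_pair f a b) ->
  exists2 t : nat, (t <= block_pairs)%N &
    segment c1 (i + t%:Z) (m - 1) = segment c2 (i + t%:Z) (m - 1).
Proof.
move=> no_periodic.
have [/existsP [t /eqP agree_t] | /existsPn disagree] := boolP [exists t : 'I_block_pairs.+1,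
    segment c1 (i + (t : nat)%:Z) (m - 1) == segment c2 (i + (t : nat)%:Z) (m - 1)].
  by exists t => //; rewrite -ltnS.
pose blocks (t : 'I_block_pairs.+1) :=
  ([tuple c1 (i + (t : nat)%:Z + (k : nat)%:Z) | k < m - 1],
   [tuple c2 (i + (t : nat)%:Z + (k : nat)%:Z) | k < m - 1]).
have [u [v [lt_uv same_blocks]]] := pigeonhole_ord blocks (ltnSn _).
case: no_periodic.
apply: (periodic_between_repetitions (i := i + (u : nat)%:Z) (j := i + (v : nat)%:Z)).
- lia.
- exact: disagree.
- by rewrite -!segment_tuple (congr1 (fun b => val b.1) same_blocks).
- by rewrite -!segment_tuple (congr1 (fun b => val b.2) same_blocks).
Qed.

End Completeness.

Theorem theorem1 (p m : nat) (f : m.-tuple 'I_p -> 'I_p) (L R : nat) :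
  (2 <= p)%N -> (2 <= m)%N -> (L + 1 + R)%N = m ->
  (injective (global_map f L) <->
   (~ (exists a b : seq 'I_p, replaceable f a b)) /\
   (~ (exists a b : seq 'I_p, periodic_pair f a b))).
Proof.
move=> p_ge2 m_ge2 _; have m_gt0 : (0 < m)%N by lia.
split.
  move=> inj; pose a0 : 'I_p := Ordinal (ltnW p_ge2).
  split=> -[a [b pair_ab]].
    exact: (replaceable_not_injective a0 m_gt0 pair_ab inj).
  exact: (periodic_not_injective a0 m_gt0 pair_ab inj).
move=> [no_replaceable no_periodic] c1 c2 same_image.
apply: functional_extensionality => d.
have [// | neq_d] := eqVneq (c1 d) (c2 d); exfalso.
set N := block_pairs p m.
have [t_right le_right agree_right] :=
  agreement_within_block_pairs m_gt0 same_image (d + 1) no_periodic.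
have [t_left le_left agree_left] :=
  agreement_within_block_pairs m_gt0 same_image (d - (m - 1)%:Z - N%:Z) no_periodic.
apply: no_replaceable.
by apply: (replaceable_between_agreements m_gt0 same_image _ _ neq_d agree_left agree_right); lia.
Qed.
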